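(* Let $A=\mathrm{diag}(\lambda_1,\dots,\lambda_n)\in\mathbb{R}^{n\times n}$ with $\lambda_1<\lambda_2<\cdots<\lambda_n$, and let $v_0\in\mathbb{R}^n$ be a unit norm vector with $d(A,v_0)\geq 2$. Consider the iteration $$\widetilde v_{k+1}=(A-\rho_k I)v_k,\quad \rho_k=v_k^TAv_k,\qquad v_{k+1}=\widetilde v_{k+1}/\|\widetilde v_{k+1}\|,\qquad k=0,1,2,\dots.$$ Then the subsequence $\{v_{2k}\}$ converges (i.e. it has a single limit vector).
   Context: $d(A,v)$ denotes the grade of $v$ w.r.t. $A$, i.e. the degree of the monic polynomial $p$ of smallest degree with $p(A)v=0$; for diagonal $A$ with distinct diagonal entries this is the number of nonzero entries of $v$. $\|\cdot\|$ is the Euclidean norm. *)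

From HB Require Import structures.
From mathcomp Require Import all_boot all_order all_algebra.
From mathcomp Require Import all_classical all_reals all_analysis.
Set Implicit Arguments. Unset Strict Implicit. Unset Printing Implicit Defensive.
Import Order.TTheory GRing.Theory Num.Theory.
Local Open Scope ring_scope.

Definition vnorm (R : realType) (n : nat) (v : 'cV[R]_n) : R :=
  Num.sqrt (\sum_i v i 0 ^+ 2).

Definition poly_mx_app (R : realType) (n : nat) (p : {poly R}) (A : 'M[R]_n)
  (v : 'cV[R]_n) : 'cV[R]_n :=
  \sum_(i < size p) p`_i *: iter i (mulmx A) v.

(* d(A,v) >= k : no monic polynomial of degree < k annihilates v *)
Definition grade_ge (R : realType) (n : nat) (A : 'M[R]_n) (v : 'cV[R]_n)
  (k : nat) : Prop :=
  forall p : {poly R}, p \is monic -> (size p <= k)%N -> poly_mx_app p A v != 0.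

Definition rq (R : realType) (n : nat) (A : 'M[R]_n) (v : 'cV[R]_n) : R :=
  (v^T *m A *m v) 0 0.

Definition vtilde_next (R : realType) (n : nat) (A : 'M[R]_n) (v : 'cV[R]_n)
  : 'cV[R]_n := (A - (rq A v)%:M) *m v.

Definition step (R : realType) (n : nat) (A : 'M[R]_n) (v : 'cV[R]_n)
  : 'cV[R]_n := (vnorm (vtilde_next A v))^-1 *: vtilde_next A v.

Definition vseq (R : realType) (n : nat) (A : 'M[R]_n) (v0 : 'cV[R]_n)
  (k : nat) : 'cV[R]_n := iter k (step A) v0.

From HB Require Import structures.
From mathcomp Require Import all_boot all_order all_algebra.
From mathcomp Require Import all_classical all_reals all_analysis.
From mathcomp Require Import ring lra.
Import Order.TTheory GRing.Theory Num.Theory numFieldNormedType.Exports.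
Local Open Scope classical_set_scope.
Local Open Scope ring_scope.

(* The residual norms r_k = |(A - rho_k) v_k| are nondecreasing and bounded, hence
   converge to some r > 0, and since <v_{k+2}, v_k> = r_k / r_{k+1} the two-step
   increments v_{k+2} - v_k tend to 0.  Coordinatewise
   v_{k+2,i} = (1 + h_k(lam_i) / (r_k r_{k+1})) v_{k,i} with the quadratic
   h_k(t) = (t - rho_k)(t - rho_{k+1}) - r_k r_{k+1}, and sum_i h_k(lam_i)^2 v_{k,i}^2
   tends to 0.  As the variance of the lam_i under v_k stays above r_0^2, h_k is
   eventually small at two distinct eigenvalues; this pins the coefficients of h_k near
   a finite set, and having vanishing increments they converge.  Then rho_{2k}, a root of
   an asymptotically fixed quadratic with vanishing increments, converges as well, so
   h_{2k} tends to a quadratic h with at most two zeros among the lam_i.  Coordinates off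
   these zeros tend to 0, the remaining squared ones are determined by |v_{2k}| = 1 and
   rho_{2k}, and their signs freeze because the two-step factors tend to 1. *)

Lemma cvg_double {T : topologicalType} {u : nat -> T} {l : T} :
  u @ \oo --> l -> (fun k => u (2 * k)%N) @ \oo --> l.
Proof. by apply: cvg_comp; apply: cvg_mulnl. Qed.

Lemma cvg_succ {T : ptopologicalType} {u : nat -> T} {l : T} :
  u @ \oo --> l -> (fun k => u k.+1) @ \oo --> l.
Proof. by rewrite -(cvg_shiftS u). Qed.

Section RealSequences.
Context {R : realType}.
Implicit Types (u v y : nat -> R) (F : seq R).

Lemma sumr_comb3 (I : finType) (F G H : I -> R) (a b c : R) :
  \sum_i (a * F i + b * G i + c * H i) =
  a * \sum_i F i + b * \sum_i G i + c * \sum_i H i.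
Proof. by rewrite !big_split /= -!mulr_sumr. Qed.

Lemma cvg_sum_fin (I : finType) (P : pred I) (u : I -> nat -> R) (l : I -> R) :
  (forall i, P i -> u i @ \oo --> l i) ->
  (fun k => \sum_(i | P i) u i k) @ \oo --> \sum_(i | P i) l i.
Proof. by move=> ul; exact: (cvg_big add_continuous _ ul). Qed.

Lemma cvg0_mul_bounded u v (B : R) :
  (forall k, `|u k| <= B) -> v @ \oo --> 0 -> (fun k => u k * v k) @ \oo --> 0.
Proof.
move=> uB v0.
have Bv : (fun k => B * `|v k|) @ \oo --> 0.
  by rewrite -(mulr0 B); apply: cvgMl_tmp; rewrite -(@normr0 _ R); apply: cvg_norm.
apply: norm_cvg0; apply: (squeeze_cvgr _ (cvg_cst 0) Bv).
by near=> k; rewrite normr_ge0 normrM ler_wpM2r.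
Unshelve. all: by end_near. Qed.

Lemma cvg_norm_of_sq u (w : R) :
  (fun k => u k ^+ 2) @ \oo --> w -> (fun k => `|u k|) @ \oo --> Num.sqrt w.
Proof.
move=> uw; under eq_fun do rewrite -sqrtr_sqr.
exact: cvg_comp uw (@sqrt_continuous R w).
Qed.

Lemma cvg0_of_sq u : (fun k => u k ^+ 2) @ \oo --> 0 -> u @ \oo --> 0.
Proof. by move=> /cvg_norm_of_sq; rewrite sqrtr0 => /norm_cvg0. Qed.

Lemma cvgn_of_sq_cvg_pos_ratio y (a : nat -> R) (w : R) :
  (forall k, y k.+1 = a k * y k) -> (\forall k \near \oo, 0 < a k) ->
  (fun k => y k ^+ 2) @ \oo --> w -> cvgn y.
Proof.
move=> yS [N _ a_gt0] yw.
have sg_yN m : Num.sg (y (N + m)%N) = Num.sg (y N).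
  elim: m => [|m IH]; first by rewrite addn0.
  by rewrite addnS yS sgrM gtr0_sg ?mul1r // a_gt0 //= leq_addr.
have sg_norm : (fun k => Num.sg (y N) * `|y k|) @ \oo --> Num.sg (y N) * Num.sqrt w.
  by apply: cvgMl_tmp; exact: cvg_norm_of_sq.
apply: (cvgP (Num.sg (y N) * Num.sqrt w)); apply: cvg_trans sg_norm.
apply: near_eq_cvg; near=> k.
have /subnKC kN : (N <= k)%N by near: k; exact: nbhs_infty_ge.
by rewrite -(sg_yN (k - N)%N) kN -numEsg.
Unshelve. all: by end_near. Qed.

Lemma seq_separated F :
  exists2 d, 0 < d & forall f g, f \in F -> g \in F -> f != g -> d <= `|f - g|.
Proof.
elim: F => [|a F [d d_gt0 dF]]; first by exists 1.
have [da da_gt0 daF] : exists2 da, 0 < da & forall g, g \in F -> g != a -> da <= `|a - g|.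
  elim: F {dF} => [|b F [db db_gt0 dbF]]; first by exists 1.
  have [->|ba] := eqVneq b a.
    by exists db => // g; rewrite inE => /predU1P[->|/dbF]; rewrite ?eqxx.
  exists (Order.min db `|a - b|); first by rewrite lt_min db_gt0 normr_gt0 subr_eq0 eq_sym.
  by move=> g; rewrite inE => /predU1P[->|gF ga]; rewrite ge_min ?lexx ?orbT ?dbF.
exists (Order.min d da); first by rewrite lt_min d_gt0 da_gt0.
move=> f g; rewrite !inE => /predU1P[->|fF] /predU1P[->|gF]; rewrite ?eqxx // => fg.
- by rewrite ge_min daF ?orbT // eq_sym.
- by rewrite distrC ge_min daF ?orbT.
- by rewrite ge_min dF.
Qed.

Definition eventually_close_to F u :=
  forall e, 0 < e -> \forall k \near \oo, exists2 f, f \in F & `|u k - f| < e.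

Lemma cvgn_eventually_close F u :
  (fun k => u k.+1 - u k) @ \oo --> 0 -> eventually_close_to F u -> cvgn u.
Proof.
(* Once the steps are below a third of the separation of F, the point of F near u_k
   can no longer change. *)
move=> du0 uF; have [d d_gt0 dF] := seq_separated F.
have d3_gt0 : 0 < d / 3 by rewrite divr_gt0.
have same_pt a b f g : f \in F -> g \in F ->
    `|a - f| < d / 3 -> `|b - a| < d / 3 -> `|b - g| < d / 3 -> f = g.
  move=> fF gF af ba bg; apply/eqP/negPn/negP => /(dF f g fF gF).
  have := ler_distD a f g; have := ler_distD b a g.
  rewrite (distrC f a) (distrC a b); lra.
have [N _ HN] : \forall k \near \oo,
    `|u k.+1 - u k| < d / 3 /\ exists2 f, f \in F & `|u k - f| < d / 3.
  by near=> k; split; near: k; [exact: cvgr0_norm_lt | exact: uF].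
have [_ [f0 f0F uf0]] := HN N (leqnn N).
have near_f0 m : `|u (N + m)%N - f0| < d / 3.
  elim: m => [|m IH]; first by rewrite addn0.
  have [du _] := HN _ (leq_addr m N).
  have [_ [g gF ug]] := HN _ (leq_addr m.+1 N).
  rewrite addnS in ug *.
  by rewrite (same_pt (u (N + m)%N) (u (N + m).+1) f0 g).
apply: (cvgP f0); apply/cvgrPdist_lt => e e_gt0; near=> k.
have [g gF ug] : exists2 g, g \in F & `|u k - g| < Order.min e (d / 3).
  by near: k; apply: uF; rewrite lt_min e_gt0.
have /subnKC kN : (N <= k)%N by near: k; exact: nbhs_infty_ge.
move: ug; rewrite lt_min => /andP[uge ugd].
by rewrite distrC (same_pt (u k) (u k) f0 g) ?subrr ?normr0 // -kN.
Unshelve. all: by end_near. Qed.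

Lemma quadratic_cvg0_eventually_close u (b c : R) :
  (fun k => u k ^+ 2 - b * u k + c) @ \oo --> 0 -> exists F, eventually_close_to F u.
Proof.
move=> q0; set D := b ^+ 2 - 4 * c.
have qE k : u k ^+ 2 - b * u k + c = (u k - b / 2) ^+ 2 - D / 4.
  by rewrite /D; field.
have [D_lt0|D_ge0] := ltrP D 0.
  have D4_gt0 : 0 < - D / 4 by rewrite divr_gt0 // oppr_gt0.
  have [N _ HN] := cvgr0_norm_lt _ q0 _ D4_gt0.
  have := HN N (leqnn N); rewrite qE ger0_norm; last by have := sqr_ge0 (u N - b / 2); lra.
  by have := sqr_ge0 (u N - b / 2); lra.
set t1 := (b - Num.sqrt D) / 2; set t2 := (b + Num.sqrt D) / 2.
have qE' k : u k ^+ 2 - b * u k + c = (u k - t1) * (u k - t2).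
  have sqD : Num.sqrt D ^+ 2 = D by rewrite sqr_sqrtr.
  by rewrite qE -sqD /t1 /t2; field.
exists [:: t1; t2] => e e_gt0; near=> k.
have : `|u k ^+ 2 - b * u k + c| < e ^+ 2.
  by near: k; exact: cvgr0_norm_lt _ q0 _ (exprn_gt0 2 e_gt0).
rewrite qE' normrM => lt_e2.
have [le1|lt1] := leP e `|u k - t1|; last by exists t1; rewrite ?inE ?eqxx.
exists t2; first by rewrite !inE eqxx orbT.
rewrite ltNge; apply/negP => le2.
have := normr_ge0 (u k - t2); have := ltW e_gt0; nra.
Unshelve. all: by end_near. Qed.

End RealSequences.

Section RayleighIteration.
Context {R : realType} {I : finType}.
Variables (lam : I -> R) (x : nat -> I -> R) (r : nat -> R).

Definition rho k := \sum_i lam i * x k i ^+ 2.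

Hypothesis lam_inj : injective lam.
Hypothesis x_normed : forall k, \sum_i x k i ^+ 2 = 1.
Hypothesis r_gt0 : forall k, 0 < r k.
Hypothesis r_sq : forall k, r k ^+ 2 = \sum_i (lam i - rho k) ^+ 2 * x k i ^+ 2.
Hypothesis x_succ : forall k i, x k.+1 i = (lam i - rho k) * x k i / r k.

Lemma rho_mean k : \sum_i (lam i - rho k) * x k i ^+ 2 = 0.
Proof.
rewrite (eq_bigr (fun i => 1 * (lam i * x k i ^+ 2) + (- rho k) * x k i ^+ 2 + 0 * 0));
  last by move=> i _; ring.
by rewrite sumr_comb3 x_normed -/(rho k); ring.
Qed.

Lemma variance_about k c :
  \sum_i (lam i - c) ^+ 2 * x k i ^+ 2 = r k ^+ 2 + (rho k - c) ^+ 2.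
Proof.
rewrite (eq_bigr (fun i => 1 * ((lam i - rho k) ^+ 2 * x k i ^+ 2)
    + (2 * (rho k - c)) * ((lam i - rho k) * x k i ^+ 2) + (rho k - c) ^+ 2 * x k i ^+ 2));
  last by move=> i _; ring.
by rewrite sumr_comb3 -r_sq rho_mean x_normed; ring.
Qed.

Lemma x_sq_le1 k i : x k i ^+ 2 <= 1.
Proof. by rewrite -(x_normed k) (bigD1 i) //= lerDl sumr_ge0 // => j _; apply: sqr_ge0. Qed.

Lemma x_abs_le1 k i : `|x k i| <= 1.
Proof. by rewrite -(@expr_le1 _ 2) // -normrX ger0_norm ?sqr_ge0 ?x_sq_le1. Qed.

Lemma rho_bound k : `|rho k| <= \sum_i `|lam i|.
Proof.
apply: le_trans (ler_norm_sum _ _ _) _; apply: ler_sum => i _.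
by rewrite normrM (ger0_norm (sqr_ge0 _)); apply: ler_piMr; rewrite ?x_sq_le1.
Qed.

Lemma r_bounded : has_ubound (range r).
Proof.
exists (1 + \sum_i lam i ^+ 2) => _ [k _ <-].
have r_le : r k ^+ 2 <= \sum_i (lam i - 0) ^+ 2 * x k i ^+ 2.
  by rewrite variance_about lerDl sqr_ge0.
have moment_le : \sum_i (lam i - 0) ^+ 2 * x k i ^+ 2 <= \sum_i lam i ^+ 2.
  by apply: ler_sum => i _; rewrite subr0; apply: ler_piMr; rewrite ?sqr_ge0 ?x_sq_le1.
nra.
Qed.

Lemma residual_cross k : \sum_i (lam i - rho k.+1) * x k.+1 i * x k i = r k.
Proof.
have r_neq0 := lt0r_neq0 (r_gt0 k).
rewrite (eq_bigr (fun i => (r k)^-1 * ((lam i - rho k) ^+ 2 * x k i ^+ 2)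
    + ((rho k - rho k.+1) / r k) * ((lam i - rho k) * x k i ^+ 2) + 0 * 0));
  last by move=> i _; rewrite x_succ; field.
by rewrite sumr_comb3 -r_sq rho_mean; field.
Qed.

Lemma r_le_succ k : r k <= r k.+1.
Proof.
have : 0 <= \sum_i ((lam i - rho k.+1) * x k.+1 i - r k.+1 * x k i) ^+ 2.
  by apply: sumr_ge0 => i _; apply: sqr_ge0.
rewrite (eq_bigr (fun i => 1 * ((lam i - rho k.+1) ^+ 2 * x k.+1 i ^+ 2)
    + (- 2 * r k.+1) * ((lam i - rho k.+1) * x k.+1 i * x k i) + r k.+1 ^+ 2 * x k i ^+ 2));
  last by move=> i _; ring.
rewrite sumr_comb3 -r_sq residual_cross x_normed.
have := r_gt0 k.+1; nra.
Qed.

Lemma r_nondecreasing : nondecreasing_seq r.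
Proof. exact/nondecreasing_seqP/r_le_succ. Qed.

Definition r_lim := sup (range r).

Lemma r_cvg : r @ \oo --> r_lim.
Proof.
exact: nondecreasing_cvgn r_nondecreasing r_bounded.
Qed.

Lemma r_lim_gt0 : 0 < r_lim.
Proof.
by apply: lt_le_trans (r_gt0 0) _; apply: ub_le_sup; [exact: r_bounded | exists 0%N].
Qed.

Lemma r_pair_cvg : (fun k => r k * r k.+1) @ \oo --> r_lim ^+ 2.
Proof. by apply: cvgM; [exact: r_cvg | exact: cvg_succ r_cvg]. Qed.

Lemma x_two_step_dot k : \sum_i x k.+2 i * x k i = r k / r k.+1.
Proof.
rewrite (eq_bigr (fun i => (lam i - rho k.+1) * x k.+1 i * x k i / r k.+1)).
  by rewrite -mulr_suml residual_cross.
by move=> i _; rewrite x_succ mulrAC.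
Qed.

Definition two_step_gap k := \sum_i (x k.+2 i - x k i) ^+ 2.

Lemma two_step_gapE k : two_step_gap k = 2 * (r k.+1 - r k) / r k.+1.
Proof.
rewrite /two_step_gap (eq_bigr (fun i => 1 * x k.+2 i ^+ 2 + (- 2) * (x k.+2 i * x k i)
    + 1 * x k i ^+ 2)); last by move=> i _; ring.
by rewrite sumr_comb3 !x_normed x_two_step_dot; field; rewrite gt_eqF.
Qed.

Lemma two_step_gap_cvg0 : two_step_gap @ \oo --> 0.
Proof.
rewrite (funext two_step_gapE) -(mul0r r_lim^-1) -(mulr0 2) -(subrr r_lim).
apply: cvgM; last by apply: cvgV; [exact: lt0r_neq0 r_lim_gt0 | exact: cvg_succ r_cvg].
by apply: cvgMl_tmp; apply: cvgB; [exact: cvg_succ r_cvg | exact: r_cvg].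
Qed.

Lemma x_two_step_diff_cvg0 i : (fun k => x k.+2 i - x k i) @ \oo --> 0.
Proof.
apply: cvg0_of_sq; apply: (squeeze_cvgr _ (cvg_cst 0) two_step_gap_cvg0).
near=> k; rewrite sqr_ge0 /two_step_gap (bigD1 i) //= lerDl.
by apply: sumr_ge0 => j _; apply: sqr_ge0.
Unshelve. all: by end_near. Qed.

Lemma rho_two_step_diff_cvg0 : (fun k => rho k.+2 - rho k) @ \oo --> 0.
Proof.
have -> : (fun k => rho k.+2 - rho k) =
    (fun k => \sum_i lam i * (x k.+2 i + x k i) * (x k.+2 i - x k i)).
  by apply/funext => k; rewrite /rho -sumrB; apply: eq_bigr => i _; ring.
have := @cvg_sum_fin _ I predT (fun i k => lam i * (x k.+2 i + x k i) * (x k.+2 i - x k i))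
  (fun=> 0).
rewrite big1 //; apply=> i _.
apply: (@cvg0_mul_bounded _ _ _ (2 * `|lam i|)) (x_two_step_diff_cvg0 i) => k.
rewrite normrM mulrC ler_wpM2r //; apply: le_trans (ler_normD _ _) _.
by have := x_abs_le1 k.+2 i; have := x_abs_le1 k i; lra.
Qed.

Definition defect k i := (lam i - rho k) * (lam i - rho k.+1) - r k * r k.+1.

Lemma x_two_step k i : x k.+2 i = (1 + defect k i / (r k * r k.+1)) * x k i.
Proof.
have r0 := lt0r_neq0 (r_gt0 k); have r1 := lt0r_neq0 (r_gt0 k.+1).
by rewrite !x_succ /defect; field; apply/andP.
Qed.

Definition defect_mass k := \sum_i defect k i ^+ 2 * x k i ^+ 2.

Lemma defect_massE k : defect_mass k = (r k * r k.+1) ^+ 2 * two_step_gap k.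
Proof.
have r0 := lt0r_neq0 (r_gt0 k); have r1 := lt0r_neq0 (r_gt0 k.+1).
rewrite /defect_mass /two_step_gap mulr_sumr; apply: eq_bigr => i _.
by rewrite x_two_step; field; apply/andP.
Qed.

Lemma defect_mass_cvg0 : defect_mass @ \oo --> 0.
Proof.
rewrite (funext defect_massE) -(mulr0 ((r_lim ^+ 2) ^+ 2)).
by apply: cvgM two_step_gap_cvg0; rewrite expr2; apply: cvgM; apply: r_pair_cvg.
Qed.

Definition lam_spread := \sum_i \sum_j (lam i - lam j) ^+ 2.

Lemma lam_spread_ge0 : 0 <= lam_spread.
Proof. by apply: sumr_ge0 => i _; apply: sumr_ge0 => j _; apply: sqr_ge0. Qed.

Lemma r_sq_le_defect_mass k a e : 0 < e ->
  (forall i, i != a -> e <= `|defect k i|) -> r k ^+ 2 <= lam_spread / e ^+ 2 * defect_mass k.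
Proof.
move=> e_gt0 far; have e2_gt0 : 0 < e ^+ 2 := exprn_gt0 2 e_gt0.
have r_le : r k ^+ 2 <= \sum_i (lam i - lam a) ^+ 2 * x k i ^+ 2.
  by rewrite variance_about lerDl sqr_ge0.
apply: le_trans r_le _; rewrite /defect_mass mulr_sumr; apply: ler_sum => i _.
have [->|ia] := eqVneq i a.
  rewrite subrr expr0n /= mul0r; apply: mulr_ge0; last by rewrite mulr_ge0 ?sqr_ge0.
  by rewrite divr_ge0 ?lam_spread_ge0 ?sqr_ge0.
have spread_ge : (lam i - lam a) ^+ 2 <= lam_spread.
  have le_row : (lam i - lam a) ^+ 2 <= \sum_j (lam i - lam j) ^+ 2.
    by rewrite (bigD1 a) //= lerDl; apply: sumr_ge0 => j _; apply: sqr_ge0.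
  apply: le_trans le_row _; rewrite /lam_spread [leRHS](bigD1 i) //= lerDl.
  by apply: sumr_ge0 => j _; apply: sumr_ge0 => l _; apply: sqr_ge0.
have e2_le : e ^+ 2 <= defect k i ^+ 2.
  rewrite -[defect k i ^+ 2]real_normK ?num_real //.
  by have := far i ia; have := ltW e_gt0; nra.
have -> : lam_spread / e ^+ 2 * (defect k i ^+ 2 * x k i ^+ 2)
    = lam_spread * (defect k i ^+ 2 / e ^+ 2) * x k i ^+ 2 by ring.
apply: ler_wpM2r; first exact: sqr_ge0.
apply: le_trans spread_ge _; apply: ler_peMr; first exact: lam_spread_ge0.
by rewrite ler_pdivlMr ?mul1r.
Qed.

Lemma two_small_defects e : 0 < e ->
  \forall k \near \oo, exists a b, [/\ a != b, `|defect k a| < e & `|defect k b| < e].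
Proof.
move=> e_gt0; have r0_gt0 := r_gt0 0; have e2_gt0 : 0 < e ^+ 2 := exprn_gt0 2 e_gt0.
have spread1_gt0 : 0 < lam_spread + 1 by rewrite ltr_wpDl ?lam_spread_ge0.
pose t := r 0 ^+ 2 * e ^+ 2 / (lam_spread + 1).
have t_gt0 : 0 < t by rewrite divr_gt0 ?mulr_gt0 ?exprn_gt0.
near=> k.
have small : defect_mass k < t by near: k; exact: cvgr_lt 0 defect_mass_cvg0 t t_gt0.
have off a : exists2 i, i != a & `|defect k i| < e.
  case: (pselect (exists2 i, i != a & `|defect k i| < e)) => // none; exfalso.
  have far i : i != a -> e <= `|defect k i|.
    by move=> ia; rewrite leNgt; apply/negP => di; apply: none; exists i.
  have := r_sq_le_defect_mass k a e e_gt0 far.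
  have : lam_spread / e ^+ 2 * defect_mass k <= lam_spread / e ^+ 2 * t.
    by rewrite ler_wpM2l ?divr_ge0 ?sqr_ge0 ?lam_spread_ge0 ?ltW.
  have -> : lam_spread / e ^+ 2 * t = r 0 ^+ 2 - r 0 ^+ 2 / (lam_spread + 1).
    by rewrite /t; field; rewrite lt0r_neq0 ?expf_neq0 ?lt0r_neq0.
  have : 0 < r 0 ^+ 2 / (lam_spread + 1) by rewrite divr_gt0 ?exprn_gt0.
  have : r 0 ^+ 2 <= r k ^+ 2 by have := @r_nondecreasing 0%N k (leq0n k); nra.
  lra.
have [a _] : exists a : I, True.
  case: (pickP (@predT I)) => [a _|none]; first by exists a.
  by have := x_normed k; rewrite big_pred0 // => /eqP; rewrite eq_sym oner_eq0.
have [b ba db] := off a; have [c cb dc] := off b.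
by exists b, c; rewrite eq_sym.
Unshelve. all: by end_near. Qed.

Definition rho_sum k := rho k + rho k.+1.
Definition rho_prod k := rho k * rho k.+1 - r k * r k.+1.

Lemma defect_quadratic k a : defect k a = lam a ^+ 2 - rho_sum k * lam a + rho_prod k.
Proof. by rewrite /defect /rho_sum /rho_prod; ring. Qed.

Lemma lam_separated : exists2 d, 0 < d & forall a b, a != b -> d <= `|lam a - lam b|.
Proof.
have [d d_gt0 dlam] := seq_separated (map lam (index_enum I)).
exists d => // a b ab; apply: dlam; rewrite ?map_f ?mem_index_enum //.
by rewrite (inj_eq lam_inj).
Qed.

Lemma lam_abs_le a : `|lam a| <= \sum_i `|lam i|.
Proof. by rewrite (bigD1 a) //= lerDl sumr_ge0. Qed.

Lemma rho_sum_cvgn : cvgn rho_sum.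
Proof.
have [d d_gt0 dlam] := lam_separated.
apply: (@cvgn_eventually_close _ [seq lam a + lam b | a <- index_enum I, b <- index_enum I]).
  have -> : (fun k => rho_sum k.+1 - rho_sum k) = (fun k => rho k.+2 - rho k).
    by apply/funext => k; rewrite /rho_sum; ring.
  exact: rho_two_step_diff_cvg0.
move=> e e_gt0; near=> k.
have [a [b [ab da db]]] : exists a b,
    [/\ a != b, `|defect k a| < e * d / 2 & `|defect k b| < e * d / 2].
  by near: k; apply: two_small_defects; rewrite divr_gt0 ?mulr_gt0.
exists (lam a + lam b); first by apply: allpairs_f; exact: mem_index_enum.
have prod_lt : `|lam a - lam b| * `|lam a + lam b - rho_sum k| < e * d.
  rewrite -normrM; have -> : (lam a - lam b) * (lam a + lam b - rho_sum k)
      = defect k a - defect k b by rewrite !defect_quadratic; ring.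
  by apply: le_lt_trans (ler_normB _ _) _; lra.
rewrite distrC ltNge; apply/negP => le_e.
by have := ler_pM (ltW d_gt0) (ltW e_gt0) (dlam _ _ ab) le_e; lra.
Unshelve. all: by end_near. Qed.

Lemma rho_prod_cvgn : cvgn rho_prod.
Proof.
have [d d_gt0 dlam] := lam_separated; set M := \sum_i `|lam i| + 1.
have M_gt0 : 0 < M by rewrite ltr_wpDl ?sumr_ge0.
apply: (@cvgn_eventually_close _ [seq lam a * lam b | a <- index_enum I, b <- index_enum I]).
  have -> : (fun k => rho_prod k.+1 - rho_prod k)
      = (fun k => rho k.+1 * (rho k.+2 - rho k) - r k.+1 * (r k.+2 - r k)).
    by apply/funext => k; rewrite /rho_prod; ring.
  have r_diff : (fun k => r k.+2 - r k) @ \oo --> 0.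
    have r2 := cvg_succ (cvg_succ r_cvg).
    by rewrite -(subrr r_lim); apply: cvgB; [exact: r2 | exact: r_cvg].
  rewrite -[0](subr0 0) -{2}(mulr0 r_lim); apply: cvgB.
    exact: (cvg0_mul_bounded _ _ _ (fun k => rho_bound k.+1) rho_two_step_diff_cvg0).
  exact: cvgM (cvg_succ r_cvg) r_diff.
move=> e e_gt0; near=> k.
have [a [b [ab da db]]] : exists a b,
    [/\ a != b, `|defect k a| < e * d / (2 * M) & `|defect k b| < e * d / (2 * M)].
  by near: k; apply: two_small_defects; rewrite divr_gt0 ?mulr_gt0.
exists (lam a * lam b); first by apply: allpairs_f; exact: mem_index_enum.
have prod_lt : `|lam b - lam a| * `|rho_prod k - lam a * lam b| < e * d.
  rewrite -normrM; have -> : (lam b - lam a) * (rho_prod k - lam a * lam b)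
      = lam b * defect k a - lam a * defect k b by rewrite !defect_quadratic; ring.
  apply: le_lt_trans (ler_normB _ _) _; rewrite !normrM.
  have lam_le c : `|lam c| <= M by rewrite /M; have := lam_abs_le c; lra.
  have lt_a : `|lam b| * `|defect k a| < M * (e * d / (2 * M)).
    by apply: le_lt_trans (ler_wpM2r (normr_ge0 _) (lam_le b)) _; rewrite ltr_pM2l.
  have lt_b : `|lam a| * `|defect k b| < M * (e * d / (2 * M)).
    by apply: le_lt_trans (ler_wpM2r (normr_ge0 _) (lam_le a)) _; rewrite ltr_pM2l.
  have -> : e * d = M * (e * d / (2 * M)) * 2 by field; rewrite lt0r_neq0.
  lra.
rewrite ltNge; apply/negP => le_e; rewrite eq_sym in ab.
by have := ler_pM (ltW d_gt0) (ltW e_gt0) (dlam _ _ ab) le_e; lra.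
Unshelve. all: by end_near. Qed.

Lemma rho_quadratic_cvg0 :
  (fun k => rho k ^+ 2 - limn rho_sum * rho k + (limn rho_prod + r_lim ^+ 2)) @ \oo --> 0.
Proof.
have -> : (fun k => rho k ^+ 2 - limn rho_sum * rho k + (limn rho_prod + r_lim ^+ 2))
    = (fun k => rho k * (rho_sum k - limn rho_sum) - (rho_prod k - limn rho_prod)
                - (r k * r k.+1 - r_lim ^+ 2)).
  by apply/funext => k; rewrite /rho_sum /rho_prod; ring.
rewrite -[0](subr0 0) -{1}[0](subr0 0); apply: cvgB; first apply: cvgB.
- apply: (cvg0_mul_bounded _ _ _ rho_bound).
  by apply/subr_cvg0; exact: rho_sum_cvgn.
- by apply/subr_cvg0; exact: rho_prod_cvgn.
- by apply/subr_cvg0; exact: r_pair_cvg.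
Qed.

Lemma rho_even_cvgn : cvgn (fun k => rho (2 * k)%N).
Proof.
have [F rhoF] := quadratic_cvg0_eventually_close (fun k => rho (2 * k)%N) _ _
  (cvg_double rho_quadratic_cvg0).
apply: cvgn_eventually_close rhoF.
under eq_fun do rewrite mulnS.
exact: (cvg_double rho_two_step_diff_cvg0).
Qed.

Definition rho_even := limn (fun k => rho (2 * k)%N).
Definition rho_odd := limn rho_sum - rho_even.

Lemma rho_odd_cvg : (fun k => rho (2 * k).+1) @ \oo --> rho_odd.
Proof.
have -> : (fun k => rho (2 * k).+1) = (fun k => rho_sum (2 * k) - rho (2 * k)%N).
  by apply/funext => k; rewrite /rho_sum; ring.
exact: cvgB (cvg_double rho_sum_cvgn) rho_even_cvgn.
Qed.

Definition defect_lim i := (lam i - rho_even) * (lam i - rho_odd) - r_lim ^+ 2.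

Lemma defect_even_cvg i : (fun k => defect (2 * k) i) @ \oo --> defect_lim i.
Proof.
apply: cvgB; last exact: cvg_double r_pair_cvg.
by apply: cvgM; apply: cvgB;
  [exact: cvg_cst | exact: rho_even_cvgn | exact: cvg_cst | exact: rho_odd_cvg].
Qed.

Lemma x_even_sq_cvg0 j : defect_lim j != 0 -> (fun k => x (2 * k)%N j ^+ 2) @ \oo --> 0.
Proof.
move=> dj; have dl2_gt0 : 0 < defect_lim j ^+ 2 by rewrite exprn_even_gt0.
have d2 : (fun k => defect (2 * k) j ^+ 2) @ \oo --> defect_lim j ^+ 2.
  by apply: cvgM; exact: defect_even_cvg.
have dx0 : (fun k => defect (2 * k) j ^+ 2 * x (2 * k)%N j ^+ 2) @ \oo --> 0.
  apply: (squeeze_cvgr _ (cvg_cst 0) (cvg_double defect_mass_cvg0)).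
  near=> k; rewrite mulr_ge0 ?sqr_ge0 //= /defect_mass (bigD1 j) //= lerDl.
  by apply: sumr_ge0 => l _; rewrite mulr_ge0 ?sqr_ge0.
have lim0 : (fun k => defect (2 * k) j ^+ 2 * x (2 * k)%N j ^+ 2 / defect (2 * k) j ^+ 2)
    @ \oo --> 0.
  rewrite -(mul0r (defect_lim j ^+ 2)^-1).
  exact: cvgM dx0 (cvgV (lt0r_neq0 dl2_gt0) d2).
apply: cvg_trans lim0; apply: near_eq_cvg; near=> k.
have : 0 < defect (2 * k) j ^+ 2 by near: k; exact: (cvgr_gt _ d2 _ dl2_gt0).
by move=> /lt0r_neq0 dk; rewrite mulrAC mulfV ?mul1r.
Unshelve. all: by end_near. Qed.

Lemma defect_lim_zeros a b c : defect_lim a = 0 -> defect_lim b = 0 -> defect_lim c = 0 ->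
  a != b -> a != c -> b = c.
Proof.
move=> da db dc ab ac.
have sum_lam u v : defect_lim u = 0 -> defect_lim v = 0 -> u != v ->
    lam u + lam v = rho_even + rho_odd.
  move=> du dv uv; apply/eqP; rewrite -subr_eq0.
  have : (lam u - lam v) * (lam u + lam v - (rho_even + rho_odd)) = 0.
    by rewrite -[RHS](subrr 0) -{1}du -dv /defect_lim; ring.
  move/eqP; rewrite mulf_eq0 => /orP[|//].
  by move=> /eqP/subr0_eq/lam_inj uv'; rewrite uv' eqxx in uv.
by apply: lam_inj; have := sum_lam _ _ da db ab; have := sum_lam _ _ da dc ac; lra.
Qed.

Lemma rho_sub k c : rho k - c = \sum_i (lam i - c) * x k i ^+ 2.
Proof.
rewrite (eq_bigr (fun i => 1 * (lam i * x k i ^+ 2) + (- c) * x k i ^+ 2 + 0 * 0)).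
  by rewrite sumr_comb3 x_normed -/(rho k); ring.
by move=> i _; ring.
Qed.

Lemma x_even_sq_cvgn_of_pivot i c : lam i != c ->
  (forall j, j != i -> lam j != c -> defect_lim j != 0) ->
  cvgn (fun k => x (2 * k)%N i ^+ 2).
Proof.
(* rho - c = sum_j (lam_j - c) x_j^2 isolates x_i^2 once the other terms vanish. *)
move=> ic others; have ic0 : lam i - c != 0 by rewrite subr_eq0.
have rest : (fun k => \sum_(j | j != i) (lam j - c) * x (2 * k)%N j ^+ 2) @ \oo --> 0.
  have := @cvg_sum_fin _ I (fun j => j != i) (fun j k => (lam j - c) * x (2 * k)%N j ^+ 2)
    (fun=> 0).
  rewrite big1 //; apply=> j ji; have [jc|jc] := eqVneq (lam j) c.
    by under eq_fun do rewrite jc subrr mul0r; exact: cvg_cst.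
  by rewrite -(mulr0 (lam j - c)); apply: cvgMl_tmp; apply: x_even_sq_cvg0 (others _ ji jc).
apply: (cvgP ((rho_even - c - 0) / (lam i - c))).
have -> : (fun k => x (2 * k)%N i ^+ 2) = (fun k =>
    (rho (2 * k)%N - c - \sum_(j | j != i) (lam j - c) * x (2 * k)%N j ^+ 2) / (lam i - c)).
  by apply/funext => k; rewrite rho_sub (bigD1 i) //=; field.
by apply: cvgMr_tmp; apply: cvgB => //; apply: cvgB; [exact: rho_even_cvgn | exact: cvg_cst].
Qed.

Lemma x_even_sq_cvgn i : cvgn (fun k => x (2 * k)%N i ^+ 2).
Proof.
have [di|di] := eqVneq (defect_lim i) 0; last by apply: (cvgP 0); exact: x_even_sq_cvg0.
have [[b bi db]|none] := pselect (exists2 b, b != i & defect_lim b = 0).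
  apply: (@x_even_sq_cvgn_of_pivot i (lam b)); first by rewrite (inj_eq lam_inj) eq_sym.
  move=> j ji; rewrite (inj_eq lam_inj) => jb; apply/eqP => dj.
  have ib : i != b by rewrite eq_sym.
  have ij : i != j by rewrite eq_sym.
  by move: jb; rewrite -(defect_lim_zeros _ _ _ di db dj ib ij) eqxx.
apply: (@x_even_sq_cvgn_of_pivot i (lam i + 1)).
  by rewrite -subr_eq0 opprD addrA subrr add0r oppr_eq0 oner_eq0.
by move=> j ji _; apply/eqP => dj; apply: none; exists j.
Qed.

Lemma x_even_cvgn i : cvgn (fun k => x (2 * k)%N i).
Proof.
have [di|di] := eqVneq (defect_lim i) 0; last first.
  by apply: (cvgP 0); apply: cvg0_of_sq; exact: x_even_sq_cvg0.
pose a k := 1 + defect (2 * k) i / (r (2 * k) * r (2 * k).+1).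
have a_cvg : a @ \oo --> 1 + defect_lim i / r_lim ^+ 2.
  apply: cvgD; first exact: cvg_cst.
  apply: cvgM; first exact: defect_even_cvg.
  exact: cvgV (lt0r_neq0 (exprn_gt0 2 r_lim_gt0)) (cvg_double r_pair_cvg).
apply: (cvgn_of_sq_cvg_pos_ratio _ a _ _ _ (x_even_sq_cvgn i)).
  by move=> k; rewrite mulnS; exact: x_two_step.
by apply: (cvgr_gt _ a_cvg); rewrite di mul0r addr0 ltr01.
Qed.

End RayleighIteration.

(* For a diagonal matrix with distinct entries, d(A, v) >= 2 iff two coordinates of v
   are nonzero. *)
Definition two_supported {R : nzRingType} {I : finType} (v : I -> R) :=
  exists i j, [/\ i != j, v i != 0 & v j != 0].

Section TwoSupport.
Context {R : realType} {I : finType} {lam : I -> R}.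
Hypothesis lam_inj : injective lam.

Lemma residual_two_supported (v : I -> R) : \sum_i v i ^+ 2 = 1 -> two_supported v ->
  two_supported (fun i => (lam i - \sum_l lam l * v l ^+ 2) * v i).
Proof.
move=> v1 [i [j [ij vi vj]]]; set rh := \sum_l lam l * v l ^+ 2.
set w := fun i => (lam i - rh) * v i.
have [//|not2] := pselect (two_supported w).
have w_mean : \sum_l w l * v l = 0.
  rewrite (eq_bigr (fun l => 1 * (lam l * v l ^+ 2) + (- rh) * v l ^+ 2 + 0 * 0)).
    by rewrite sumr_comb3 v1 -/rh; ring.
  by move=> l _; rewrite /w; ring.
have w0 a : w a = 0.
  apply/eqP; apply: contraT => wa; suff : w a * v a = 0.
    by move/eqP; rewrite mulf_eq0 (negbTE wa) /= => /eqP va; move: wa; rewrite /w va mulr0 eqxx.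
  rewrite -w_mean (bigD1 a) //= big1 ?addr0 // => b ba.
  have [->|wb] := eqVneq (w b) 0; first by rewrite mul0r.
  by exfalso; apply: not2; exists a, b; rewrite eq_sym.
have lam_rh c : v c != 0 -> lam c = rh.
  move=> vc; apply/eqP; rewrite -subr_eq0.
  by have /eqP := w0 c; rewrite /w mulf_eq0 (negbTE vc) orbF.
by move: ij; rewrite (lam_inj i j) ?eqxx // !lam_rh.
Qed.

End TwoSupport.

Section DiagonalRayleighIteration.
Context {R : realType} {n : nat} {lam : 'rV[R]_n}.
Local Notation A := (diag_mx lam).
Implicit Types v : 'cV[R]_n.

Lemma rq_diag v : rq A v = \sum_i lam 0 i * v i 0 ^+ 2.
Proof. by rewrite /rq mxE; apply: eq_bigr => i _; rewrite mul_mx_diag !mxE; ring. Qed.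

Lemma vtilde_next_diag v i : vtilde_next A v i 0 = (lam 0 i - rq A v) * v i 0.
Proof. by rewrite /vtilde_next mulmxBl mul_scalar_mx mul_diag_mx !mxE; ring. Qed.

Lemma step_entry v i : step A v i 0 = vtilde_next A v i 0 / vnorm (vtilde_next A v).
Proof. by rewrite /step mxE mulrC. Qed.

Lemma vnorm_sq v : vnorm v ^+ 2 = \sum_i v i 0 ^+ 2.
Proof. by rewrite sqr_sqrtr // sumr_ge0 // => i _; apply: sqr_ge0. Qed.

Lemma vnorm_gt0 v i : v i 0 != 0 -> 0 < vnorm v.
Proof.
move=> vi; rewrite sqrtr_gt0 (bigD1 i) //=.
have : 0 <= \sum_(j | j != i) v j 0 ^+ 2 by apply: sumr_ge0 => j _; apply: sqr_ge0.
have : 0 < v i 0 ^+ 2 by rewrite exprn_even_gt0.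
lra.
Qed.

Lemma poly_mx_app_XsubC v c i : poly_mx_app ('X - c%:P) A v i 0 = (lam 0 i - c) * v i 0.
Proof.
rewrite /poly_mx_app size_XsubC big_ord_recr big_ord_recr big_ord0 /=.
by rewrite add0r mul_diag_mx !mxE !coefB !coefX !coefC /=; ring.
Qed.

Lemma grade2_two_supported v : vnorm v = 1 -> grade_ge A v 2 ->
  two_supported (fun i => v i 0).
Proof.
move=> v1 grade; have [i vi] : exists i, v i 0 != 0.
  case: (pselect (exists i, v i 0 != 0)) => // none; exfalso.
  move: v1; rewrite /vnorm big1 ?sqrtr0 => [/eqP|j _]; first by rewrite eq_sym oner_eq0.
  by have [->|vj] := eqVneq (v j 0) 0; [rewrite expr0n | case: none; exists j].
have [j] : exists j, poly_mx_app ('X - (lam 0 i)%:P) A v j 0 != 0.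
  case: (pselect (exists j, poly_mx_app ('X - (lam 0 i)%:P) A v j 0 != 0)) => // none; exfalso.
  apply: (negP (grade _ (monicXsubC (lam 0 i)) (eq_leq (size_XsubC _)))).
  apply/eqP/matrixP => j k; rewrite (ord1 k) mxE.
  by apply/eqP/negPn/negP => nz; apply: none; exists j.
rewrite poly_mx_app_XsubC mulf_eq0 negb_or subr_eq0 => /andP[lji vj].
by exists j, i; split => //; apply: contraNneq lji => ->.
Qed.

Hypothesis lam_inj : injective (fun i => lam 0 i).

Definition unit_two_supported v := \sum_i v i 0 ^+ 2 = 1 /\ two_supported (fun i => v i 0).

Lemma residual_norm_gt0 v : unit_two_supported v -> 0 < vnorm (vtilde_next A v).
Proof.
case=> v1 /(residual_two_supported lam_inj _ v1)[i [_ [_ wi _]]].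
by apply: (@vnorm_gt0 _ i); rewrite vtilde_next_diag rq_diag.
Qed.

Lemma step_unit_two_supported v : unit_two_supported v -> unit_two_supported (step A v).
Proof.
move=> uv; have N_neq0 := lt0r_neq0 (residual_norm_gt0 _ uv); case: uv => v1 v2.
split.
  under eq_bigr do rewrite step_entry expr_div_n.
  by rewrite -mulr_suml -vnorm_sq mulfV // expf_neq0.
have [i [j [ij wi wj]]] := residual_two_supported lam_inj _ v1 v2.
exists i, j; rewrite !step_entry !vtilde_next_diag rq_diag.
by split => //; rewrite mulf_neq0 ?invr_eq0.
Qed.

End DiagonalRayleighIteration.

Theorem theorem4p3 (R : realType) (n : nat) (lam : 'rV[R]_n) (v0 : 'cV[R]_n)
  (hlam : forall i j : 'I_n, (i < j)%N -> lam 0 i < lam 0 j)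
  (hunit : vnorm v0 = 1)
  (hgrade : grade_ge (diag_mx lam) v0 2) :
  (forall k, vtilde_next (diag_mx lam) (vseq (diag_mx lam) v0 k) != 0) /\
  exists L : 'cV[R]_n, forall i : 'I_n,
    (fun k : nat => vseq (diag_mx lam) v0 (2 * k)%N i 0) @ \oo --> L i 0.
Proof.
have lam_inj : injective (fun i => lam 0 i).
  move=> i j /= lij; apply/val_inj.
  by case: (ltngtP i j) => // /hlam; rewrite lij ltxx.
have support k : unit_two_supported (vseq (diag_mx lam) v0 k).
  elim: k => [|k IH]; last exact: step_unit_two_supported lam_inj _ IH.
  rewrite /vseq /=; split; first by rewrite -vnorm_sq hunit expr1n.
  exact: grade2_two_supported _ hunit hgrade.
pose x k i := vseq (diag_mx lam) v0 k i 0.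
pose r k := vnorm (vtilde_next (diag_mx lam) (vseq (diag_mx lam) v0 k)).
have r_gt0 k : 0 < r k := residual_norm_gt0 lam_inj _ (support k).
have rq_rho k : rq (diag_mx lam) (vseq (diag_mx lam) v0 k) = rho (fun i => lam 0 i) x k.
  exact: rq_diag.
have x_succ k i : x k.+1 i = (lam 0 i - rho (fun i => lam 0 i) x k) * x k i / r k.
  by rewrite /x /= step_entry vtilde_next_diag rq_rho.
have r_sq k : r k ^+ 2 = \sum_i (lam 0 i - rho (fun i => lam 0 i) x k) ^+ 2 * x k i ^+ 2.
  by rewrite vnorm_sq; apply: eq_bigr => i _; rewrite vtilde_next_diag rq_rho exprMn.
split => [k|].
  apply/eqP => t0; have := r_gt0 k; rewrite /r t0 /vnorm big1 ?sqrtr0 ?ltxx // => i _.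
  by rewrite mxE expr0n.
exists (\col_i limn (fun k => x (2 * k)%N i)) => i; rewrite mxE.
exact: (x_even_cvgn _ _ _ lam_inj (fun k => (support k).1) r_gt0 r_sq x_succ i).
Qed.
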